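(* Let $N\in\mathbb{N}$ and $X_1,X_2\subseteq[N]$, $X=(X_1,X_2)$, and let $\mu=\mathbb{E}_{\sigma\sim S_N}[|X_\sigma|]$ (uniform $\sigma$). Then for every real $u\ge 6\mu$, $$\Pr_{\pi\sim S_N}\big[|X_\pi|\ge \mu+u\big]\le \exp\!\left(-\tfrac34 u\right).$$
   Context: For $\pi\in S_N$, $X_\pi=\{(i,j): i\in X_1,\ j\in X_2,\ \pi(i)=j\}$ is the set of $X$-pairs of $\pi$; $\pi\sim S_N$ denotes a uniformly random permutation. *)

From HB Require Import structures.
From mathcomp Require Import all_boot all_order all_algebra all_fingroup.
From mathcomp Require Import all_classical all_reals.
From mathcomp Require Import all_analysis.
Set Implicit Arguments. Unset Strict Implicit. Unset Printing Implicit Defensive.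
Import Order.TTheory GRing.Theory Num.Theory.
Local Open Scope ring_scope.

Definition Xpairs (N : nat) (X1 X2 : {set 'I_N}) (pi : 'S_N) : {set 'I_N * 'I_N} :=
  [set ij | [&& ij.1 \in X1, ij.2 \in X2 & pi ij.1 == ij.2]].

Definition Xmean (R : realType) (N : nat) (X1 X2 : {set 'I_N}) : R :=
  (\sum_(s : 'S_N) (#|Xpairs X1 X2 s|)%:R) / (#|{perm 'I_N}|)%:R.

Definition Xtail (R : realType) (N : nat) (X1 X2 : {set 'I_N}) (t : R) : R :=
  (#|[set pi : 'S_N | t <= (#|Xpairs X1 X2 pi|)%:R]|)%:R / (#|{perm 'I_N}|)%:R.

From HB Require Import structures.
From mathcomp Require Import all_boot all_order all_algebra all_fingroup.
From mathcomp Require Import all_classical all_reals.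
From mathcomp Require Import all_analysis.
From mathcomp Require Import unstable zify ring lra.
Import Order.TTheory GRing.Theory Num.Theory.
Set Implicit Arguments. Unset Strict Implicit. Unset Printing Implicit Defensive.

(* A uniformly random permutation maps a fixed k-subset of X1 into X2 with
   probability |X2|^_k / N^_k, so by the union bound over the k-subsets of X1,
   Pr[|X_pi| >= k] <= C(|X1|, k) |X2|^_k / N^_k <= mu^k / k!, where
   mu = |X1| |X2| / N.  For k = ceil(mu + u) >= 7 mu this is at most
   (e mu / k)^k <= (e / 7)^k <= exp(-3k/4), because e^(7/4) <= 7. *)

Lemma card_uniform_fibers (aT rT : finType) (f : aT -> rT) (A : {set aT})
    (B : {set rT}) n :
  {in A, forall x, f x \in B} ->
  {in B, forall y, #|[set x in A | f x == y]| = n} ->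
  #|A| = #|B| * n.
Proof.
move=> fAB fiber; rewrite -sum1_card (partition_big f (mem B)) //=.
rewrite -sum_nat_const; apply: eq_bigr => y yB; rewrite -(fiber y yB) -sum1_card.
by apply: eq_bigl => x; rewrite inE.
Qed.

Lemma ffact_mul_expn_le a b n k :
  b <= n -> a ^_ k * b ^_ k * n ^ k <= (a * b) ^ k * n ^_ k.
Proof.
move=> bn; elim: k => [|k IH]; first by rewrite !ffactn0 expn0.
have step : (a - k) * ((b - k) * n) <= a * (b * (n - k)).
  by apply: leq_mul; [exact: leq_subr | nia].
have := leq_mul IH step; rewrite !ffactnSr !expnS.
by move: (a - k) (b - k) (n - k) => a' b' n'; nia.
Qed.

Section PermsInto.
Variable N : nat.
Implicit Types (S T : {set 'I_N}) (p : 'S_N).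

Definition perms_into S T : {set 'S_N} := [set p : 'S_N | S \subset p @^-1: T].

Lemma tperm_mem T a b x : a \in T -> b \in T -> (tperm a b x \in T) = (x \in T).
Proof. by move=> aT bT; case: tpermP => [->|->|//]; rewrite aT bT. Qed.

(* Postcomposing with the transposition (u t) moves the fibre of
   [p |-> p s] over t onto the fibre over u, and preserves [perms_into S T]. *)
Lemma card_perms_into_fiber S T s t : s \in S -> t \in T ->
  #|perms_into S T| = #|T| * #|[set p in perms_into S T | p s == t]|.
Proof.
move=> sS tT; apply: (card_uniform_fibers (f := fun p : 'S_N => p s)) => [p | u uT].
  by rewrite inE => /fintype.subsetP/(_ s sS); rewrite inE.
rewrite -(card_rcoset _ (tperm u t)); apply: eq_card => p.
rewrite mem_rcoset tpermV !inE permM -[X in _ == X](tpermR u t) (inj_eq perm_inj).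
congr (_ && _); apply: eq_subset_r => x.
by rewrite !inE permM tperm_mem.
Qed.

(* Precomposing with the transposition (y s), for y outside S :\ s, turns a
   permutation sending s to t into one sending y to t, and back. *)
Lemma card_perms_into_preimage S T s t : s \in S -> t \in T ->
  #|perms_into (S :\ s) (T :\ t)|
    = #|~: (S :\ s)| * #|[set p in perms_into S T | p s == t]|.
Proof.
move=> sS tT; set S' := S :\ s.
apply: (card_uniform_fibers (f := fun p : 'S_N => (p^-1)%g t)) => [p | y].
  rewrite inE => /fintype.subsetP pS'; rewrite inE; apply/negP => /pS'.
  by rewrite !inE permKV eqxx.
rewrite inE => yS'.
rewrite -(card_lcoset [set p in perms_into S T | p s == t] (tperm y s)).
apply: eq_card => q; rewrite mem_lcoset tpermV !inE permM tpermR.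
rewrite -(inj_eq (@perm_inj _ q)) permKV [t == _]eq_sym.
apply: andb_id2r => /eqP qy.
have neq_y x : x \in S' -> y != x by move=> xS'; apply: contraNneq yS' => ->.
apply/fintype.subsetP/fintype.subsetP => sub x.
  rewrite inE permM; case: (x =P s) => [->|/eqP xs xS]; first by rewrite tpermR qy.
  have xS' : x \in S' by rewrite !inE xs.
  rewrite tpermD ?neq_y // 1?eq_sym //.
  by have := sub x xS'; rewrite !inE => /andP [].
move=> xS'; move: (xS'); rewrite !inE => /andP [xs xS].
have := sub x xS; rewrite !inE permM tpermD ?neq_y // 1?eq_sym // => ->.
by rewrite andbT -qy (inj_eq perm_inj) neq_y.
Qed.

Lemma card_perms_into_rec S T s t : s \in S -> t \in T ->
  #|perms_into S T| * (N - #|S :\ s|) = #|T| * #|perms_into (S :\ s) (T :\ t)|.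
Proof.
move=> sS tT; rewrite card_perms_into_preimage //.
rewrite [in LHS](card_perms_into_fiber sS tT).
have -> : #|~: (S :\ s)| = N - #|S :\ s|.
  by have := cardsC (S :\ s); rewrite card_ord; lia.
by rewrite mulnAC mulnA.
Qed.

Lemma card_perms_into S T : #|perms_into S T| * N ^_ #|S| = N`! * #|T| ^_ #|S|.
Proof.
have [k] := ubnP #|S|; elim: k S T => // k IH S T.
have [-> _ | [s sS] ltSk] := set_0Vmem S.
  rewrite cards0 ffactn0 !muln1 -card_Sn -cardsT; apply: eq_card => p.
  by rewrite !inE finset.sub0set.
have cardS : #|S| = #|S :\ s|.+1 by rewrite (cardsD1 s S) sS.
have [-> | [t tT]] := set_0Vmem T.
  rewrite cards0 cardS ffact0n muln0 (_ : perms_into S _ = finset.set0) ?cards0 //.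
  apply/setP => p; rewrite !inE; apply/negP => /fintype.subsetP/(_ s sS).
  by rewrite !inE.
have := IH (S :\ s) (T :\ t); rewrite -ltnS -cardS => /(_ ltSk).
have := card_perms_into_rec sS tT.
rewrite cardS ffactnSr ffactnS (cardsD1 t T) tT add1n /=.
by move: (N - _) => d; nia.
Qed.

End PermsInto.

Section Xpairs.
Variables (N : nat) (X1 X2 : {set 'I_N}).

Lemma card_Xpairs (p : 'S_N) : #|Xpairs X1 X2 p| = #|X1 :&: p @^-1: X2|.
Proof.
have -> : Xpairs X1 X2 p = (fun i => (i, p i)) @: (X1 :&: p @^-1: X2).
  apply/setP => -[i j]; rewrite !inE /=.
  apply/and3P/imsetP => [[iX1 jX2 /eqP pij]|].
    by exists i; rewrite ?pij // !inE iX1 pij.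
  by case=> x; rewrite !inE => /andP [? ?] [-> ->].
by apply: card_imset => x y [].
Qed.

Lemma sum_card_Xpairs :
  (\sum_(p : 'S_N) #|Xpairs X1 X2 p|) * N = N`! * (#|X1| * #|X2|).
Proof.
rewrite (eq_bigr (fun p : 'S_N => \sum_(i in X1) (p i \in X2))); last first.
  move=> p _; rewrite card_Xpairs -sum1_card big_mkcond [RHS]big_mkcond.
  by apply: eq_bigr => i _; rewrite !inE; case: (i \in X1); case: (p i \in X2).
rewrite exchange_big big_distrl /= mulnCA -sum_nat_const.
apply: congr_big => // i _.
have := card_perms_into [set i] X2; rewrite cards1 !ffactn1 => <-; congr (_ * _).
rewrite -sum1_card [RHS]big_mkcond; apply: congr_big => // p _.
by rewrite !inE finset.sub1set inE.
Qed.

Lemma card_Xpairs_ge_union k :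
  #|[set p : 'S_N | k <= #|Xpairs X1 X2 p|]|
    <= \sum_(S in [set S : {set 'I_N} | (S \subset X1) && (#|S| == k)])
         #|perms_into S X2|.
Proof.
apply: leq_trans (card_big_setU _ _ _); apply: subset_leq_card.
apply/fintype.subsetP => p; rewrite inE card_Xpairs => kX.
have : 0 < #|[set S : {set 'I_N} | (S \subset X1 :&: p @^-1: X2) && (#|S| == k)]|.
  by rewrite cards_draws bin_gt0.
case/card_gt0P => S; rewrite inE => /andP [sub cardS]; apply/bigcupP; exists S.
  by rewrite inE cardS andbT (fintype.subset_trans sub) ?subsetIl.
by rewrite inE (fintype.subset_trans sub) ?subsetIr.
Qed.

Lemma card_Xpairs_ge_bound k : k <= N ->
  #|[set p : 'S_N | k <= #|Xpairs X1 X2 p|]| * k`! * N ^ k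
    <= N`! * (#|X1| * #|X2|) ^ k.
Proof.
move=> kN; have ffN : 0 < N ^_ k by rewrite ffact_gt0.
have count : (\sum_(S in [set S : {set 'I_N} | (S \subset X1) && (#|S| == k)])
                 #|perms_into S X2|) * N ^_ k = 'C(#|X1|, k) * (N`! * #|X2| ^_ k).
  rewrite big_distrl /= -cards_draws -sum_nat_const; apply: eq_bigr => S.
  by rewrite inE => /andP [_ /eqP <-]; exact: card_perms_into.
have X2N : #|X2| <= N by rewrite -[leqRHS](card_ord N) max_card.
have := leq_mul (leqnn N`!) (ffact_mul_expn_le #|X1| k X2N).
have := leq_mul (leq_mul (card_Xpairs_ge_union k) (leqnn (N ^_ k)))
                (leqnn (k`! * N ^ k)).
rewrite count -(bin_ffact #|X1|) => h1 h2; rewrite -(leq_pmul2r ffN); lia.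
Qed.

End Xpairs.

Local Open Scope ring_scope.

Section ExpBounds.
Variable R : realType.
Implicit Types x : R.

Lemma expR_le_inv1B x : x < 1 -> expR x <= (1 - x)^-1.
Proof.
move=> x1; rewrite -[expR x]invrK -expRN lef_pV2 ?posrE ?expR_gt0 ?subr_gt0 //.
exact: expR_ge1Dx.
Qed.

(* e^(7/4) = (e^(1/8))^14 <= (8/7)^14, and 8^14 <= 7^15. *)
Lemma expR_7_4_le7 : expR (7 / 4 : R) <= 7.
Proof.
have -> : (7 / 4 : R) = 14%:R * (1 / 8) by rewrite -[14%:R]/(14 : R); lra.
rewrite expRM_natl; apply: le_trans (_ : (8 / 7 : R) ^+ 14 <= 7).
  apply: lerXn2r; rewrite ?nnegrE ?expR_ge0 //.
  have -> : (8 / 7 : R) = (1 - 1 / 8)^-1.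
    by rewrite (_ : 1 - 1 / 8 = 7 / 8 :> R) ?invf_div //; lra.
  by apply: expR_le_inv1B; lra.
rewrite exprMn exprVn ler_pdivrMr ?exprn_gt0 // -[_ * _]exprS -!natrX ler_nat.
lia.
Qed.

Lemma pow_div_fact_le_expR x k : 0 <= x -> x ^+ k / k`!%:R <= expR x.
Proof.
move=> x0; case: k => [|k].
  by rewrite expr0 fact0 divr1 (le_trans _ (expR_ge1Dx x)) ?lerDl.
by apply: le_trans (expR_ge1Dxn k x0); rewrite lerDr.
Qed.

Lemma pow_div_fact_le_expRN (mu u : R) k :
  0 <= mu -> 7 * mu <= k%:R -> u <= k%:R ->
  mu ^+ k / k`!%:R <= expR (- (3 / 4 * u)).
Proof.
move=> mu0 muk uk; have kfact_gt0 : (0 : R) < k`!%:R by rewrite ltr0n fact_gt0.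
have e_div7 : expR 1 / 7 <= expR (- (3 / 4) : R).
  rewrite [X in expR X](_ : _ = 7 / 4 + - (3 / 4) :> R) ?expRD; last lra.
  have := expR_7_4_le7; have := expR_gt0 (- (3 / 4) : R); nra.
apply: (@le_trans _ _ ((k%:R / 7) ^+ k / k`!%:R)).
  by rewrite ler_pM2r ?invr_gt0 //; apply: lerXn2r; rewrite ?nnegrE //; lra.
apply: (@le_trans _ _ ((expR 1 / 7) ^+ k)).
  rewrite !expr_div_n mulrAC ler_pM2r ?invr_gt0 ?exprn_gt0 //.
  by rewrite -expRM_natl mulr1 pow_div_fact_le_expR.
apply: (@le_trans _ _ (expR (- (3 / 4)) ^+ k)).
  by apply: lerXn2r; rewrite ?nnegrE ?divr_ge0 ?expR_ge0.
by rewrite -expRM_natl ler_expR; lra.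
Qed.

End ExpBounds.

Section XmeanXtail.
Variables (R : realType) (N : nat) (X1 X2 : {set 'I_N}).

Let card_perm_gt0 : (0 : R) < #|{perm 'I_N}|%:R.
Proof. by rewrite card_Sn ltr0n fact_gt0. Qed.

Lemma Xmean_ge0 : 0 <= Xmean R X1 X2.
Proof. by rewrite divr_ge0 ?sumr_ge0 // ltW. Qed.

Lemma Xmean_mulN : Xmean R X1 X2 * N%:R = (#|X1| * #|X2|)%:R.
Proof.
rewrite /Xmean -natr_sum mulrAC -natrM sum_card_Xpairs card_Sn natrM.
by rewrite mulrC mulKf // gt_eqF // ltr0n fact_gt0.
Qed.

Lemma Xtail_le_least_nat (t : R) k :
  (forall n : nat, t <= n%:R -> (k <= n)%N) -> Xtail X1 X2 t <= Xtail X1 X2 k%:R.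
Proof.
move=> kmin; rewrite ler_pM2r ?invr_gt0 // ler_nat; apply: subset_leq_card.
by apply/fintype.subsetP => p; rewrite !inE ler_nat; apply: kmin.
Qed.

Lemma Xtail_nat_le_Xmean_pow k :
  Xtail X1 X2 k%:R <= Xmean R X1 X2 ^+ k / k`!%:R.
Proof.
have kfact_gt0 : (0 : R) < k`!%:R by rewrite ltr0n fact_gt0.
rewrite /Xtail (_ : [set p : 'S_N | _] = [set p : 'S_N | (k <= #|Xpairs X1 X2 p|)%N]);
  last by apply/setP => p; rewrite !inE ler_nat.
case: (leqP k N) => [kN | Nk]; last first.
  rewrite (_ : [set p : 'S_N | _] = finset.set0) ?cards0 ?mul0r; last first.
    apply/setP => p; rewrite !inE; apply/negbTE; rewrite -ltnNge card_Xpairs.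
    by apply: leq_ltn_trans Nk; rewrite -[leqRHS](card_ord N) max_card.
  by rewrite divr_ge0 ?exprn_ge0 ?Xmean_ge0.
rewrite ler_pdivrMr // mulrAC ler_pdivlMr //.
have NkR : (0 : R) < N%:R ^+ k.
  have [N0 | N_gt0] := posnP N; last by rewrite exprn_gt0 // ltr0n.
  by move: kN; rewrite N0 leqn0 => /eqP ->; rewrite expr0.
rewrite -(ler_pM2r NkR) [X in _ <= X]mulrAC -exprMn Xmean_mulN card_Sn.
rewrite -!natrX -!natrM ler_nat.
by rewrite (leq_trans (card_Xpairs_ge_bound X1 X2 kN)) // mulnC.
Qed.

End XmeanXtail.

Theorem theorem3 (R : realType) (N : nat) (X1 X2 : {set 'I_N}) (u : R) :
  6 * Xmean R X1 X2 <= u ->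
  Xtail X1 X2 (Xmean R X1 X2 + u) <= expR (- (3 / 4 * u)).
Proof.
move=> le_6mu_u; have mu_ge0 := Xmean_ge0 R X1 X2.
have ex_n : exists n : nat, Xmean R X1 X2 + u <= n%:R.
  by exists (Num.trunc (Xmean R X1 X2 + u)).+1; exact/ltW/truncnS_gt.
case: (ex_minnP ex_n) => k le_k kmin.
apply: le_trans (Xtail_le_least_nat X1 X2 kmin) _.
apply: le_trans (Xtail_nat_le_Xmean_pow R X1 X2 k) _.
by apply: pow_div_fact_le_expRN => //; lra.
Qed.
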